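(* Let $\beta>2\alpha>0$ with $\beta+2\alpha>1$, assume $s_N=o\big(\sqrt N/\log N\big)$ and let $0<r<m^*$. Then there exists $\rho>0$ (depending on $r$ but not on $N$) such that $$\inf_{x\in\Delta_N^r}\varphi_N\Big(\sqrt{\tfrac{s_N}{N}}x\Big)\ge\varphi_N(\overrightarrow{m}^* )+\rho.$$
   Context: $A=\beta I+\alpha(P+P^T)$ is the $s_N\times s_N$ symmetric circulant matrix ($P$ the cyclic shift), $e_k$ the standard basis of $\mathbb{R}^{s_N}$, $\varphi_N(x)=\frac12x^TAx-\sum_{k=1}^{s_N}\log\cosh(x^TAe_k)$. $m^*$ is the largest solution of $x=\tanh((\beta+2\alpha)x)$ and $\overrightarrow{m}^*=(m^*,\dots,m^* )\in\mathbb{R}^{s_N}$. Let $\lambda_{\min},\lambda_{\max}$ be the smallest and largest eigenvalues of $A$, fix $R>2\lambda_{\max}/\lambda_{\min}$, let $B_{R\sqrt N}$ be the centered Euclidean ball of radius $R\sqrt N$ in $\mathbb{R}^{s_N}$, and $$\Delta_N^r=B_{R\sqrt N}\setminus\Big(\Big[\sqrt{\tfrac{N}{s_N}}(m^*-r),\sqrt{\tfrac{N}{s_N}}(m^*+r)\Big]^{s_N}\cup\Big[\sqrt{\tfrac{N}{s_N}}(-m^*-r),\sqrt{\tfrac{N}{s_N}}(-m^*+r)\Big]^{s_N}\Big).$$ *)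

From mathcomp Require Import all_boot all_order all_algebra.
From mathcomp Require Import all_classical all_reals all_analysis.
Set Implicit Arguments. Unset Strict Implicit. Unset Printing Implicit Defensive.
Import Order.TTheory GRing.Theory Num.Theory.
Local Open Scope ring_scope.

Section Defs.
Variable R : realType.

Definition coshR (x : R) : R := (expR x + expR (- x)) / 2.
Definition tanhR (x : R) : R := (expR x - expR (- x)) / (expR x + expR (- x)).

Definition cshift (n : nat) : 'M[R]_n :=
  \matrix_(i < n, j < n) (((i.+1 %% n)%N == j)%:R : R).

Definition Amat (n : nat) (alpha beta : R) : 'M[R]_n :=
  beta%:M + alpha *: (cshift n + (cshift n)^T).

Definition ebasis (n : nat) (k : 'I_n) : 'rV[R]_n := \row_j ((j == k)%:R : R).

Definition qform (n : nat) (A : 'M[R]_n) (x y : 'rV[R]_n) : R :=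
  (x *m A *m y^T) 0 0.

Definition phiN (n : nat) (alpha beta : R) (x : 'rV[R]_n) : R :=
  qform (Amat n alpha beta) x x / 2
  - \sum_(k < n) ln (coshR (qform (Amat n alpha beta) x (ebasis k))).

Definition is_mstar (alpha beta m : R) : Prop :=
  m = tanhR ((beta + 2 * alpha) * m) /\
  forall y : R, y = tanhR ((beta + 2 * alpha) * y) -> y <= m.

Definition is_min_eig (n : nat) (A : 'M[R]_n) (l : R) : Prop :=
  eigenvalue A l /\ forall a, eigenvalue A a -> l <= a.
Definition is_max_eig (n : nat) (A : 'M[R]_n) (l : R) : Prop :=
  eigenvalue A l /\ forall a, eigenvalue A a -> a <= l.

Definition const_vec (n : nat) (c : R) : 'rV[R]_n := \row_j c.

Definition in_ball (n : nat) (rad : R) (x : 'rV[R]_n) : Prop :=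
  Num.sqrt (\sum_(i < n) x 0 i ^+ 2) <= rad.

Definition in_cube (n : nat) (a b : R) (x : 'rV[R]_n) : Prop :=
  forall i, a <= x 0 i <= b.

(* Delta_N^r, with n = s_N *)
Definition DeltaNr (N n : nat) (Rad m r : R) (x : 'rV[R]_n) : Prop :=
  let c := Num.sqrt (N%:R / n%:R) in
  in_ball (Rad * Num.sqrt N%:R) x /\
  ~ (in_cube (c * (m - r)) (c * (m + r)) x \/
     in_cube (c * (- m - r)) (c * (- m + r)) x).

End Defs.

From mathcomp Require Import all_boot all_order all_algebra.
From mathcomp Require Import all_classical all_reals all_analysis.
From mathcomp Require Import ring lra.
Import Order.TTheory GRing.Theory Num.Theory.
Local Open Scope ring_scope.
Set Implicit Arguments.
Unset Strict Implicit.

(* Put u = yA, t_i = tanh u_i and v_i = y_i - t_i.  Completing squares writes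
   phi_N(y) as a sum over the sites of the cycle of
     (b - 2a)/2 v_i^2 + a/2 (v_i + v_(i+1))^2 + K(u_i) + a/2 (t_i - t_(i+1))^2,
   where K(u) = u tanh u - log cosh u - (b + 2a)/2 tanh^2 u; at the constant
   vector m = m^* every site contributes K(ws), with ws = (b + 2a) m.  K is even
   and, since w - (b + 2a) tanh w is convex on [0, oo) and vanishes at 0 and ws,
   K is minimal exactly at +-ws; so every site contributes at least K(ws).  A point
   leaving both cubes [m - r, m + r]^n and [-m - r, -m + r]^n has a site where
   v_i is large, or where t_i is far from +-m (so u_i is far from +-ws), or,
   going around the cycle from a coordinate near +m to one near -m, a site
   where t_i jumps from about m to about -m.  Each case gains a constant
   independent of the dimension. *)

Section MeanValue.
Variables (R : realType) (f df : R -> R).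
Hypothesis f_df : forall x : R, is_derive x 1 f (df x).

Lemma MVT_is_derive a b : a < b -> exists2 c, a < c < b & f b - f a = df c * (b - a).
Proof.
move=> ab; have [|c cab ->] := MVT ab (fun x _ => f_df x).
  by apply: derivable_within_continuous => x _; case: (f_df x).
by exists c => //; rewrite in_itv in cab.
Qed.

Lemma gtr0_is_derive_lt a b : a < b -> (forall c, a < c < b -> 0 < df c) -> f a < f b.
Proof.
move=> ab df_gt0; have [c /df_gt0 dfc E] := MVT_is_derive ab.
by rewrite -subr_gt0 E mulr_gt0 // subr_gt0.
Qed.

Lemma ltr0_is_derive_gt a b : a < b -> (forall c, a < c < b -> df c < 0) -> f b < f a.
Proof.
move=> ab df_lt0; have [c /df_lt0 dfc E] := MVT_is_derive ab.
by rewrite -subr_lt0 E nmulr_rlt0 // subr_gt0.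
Qed.

Lemma is_derive_lipschitz k x y : (forall c, `|df c| <= k) -> `|f x - f y| <= k * `|x - y|.
Proof.
move=> df_le; wlog xy : x y / x < y.
  move=> W; case: (ltgtP x y) => [/W //|/W|->]; last by rewrite !subrr normr0 mulr0.
  by rewrite distrC (distrC x).
have [c _ E] := MVT_is_derive xy.
by rewrite distrC (distrC x) E normrM ler_wpM2r.
Qed.

Section ConvexZeros.
Variables a z : R.
Hypotheses (df_incr : forall x y, a <= x -> x < y -> df x < df y)
  (fa0 : f a = 0) (fz0 : f z = 0) (az : a < z).

Lemma ltr0_between_zeros x : a < x < z -> f x < 0.
Proof.
case/andP=> ax xz.
have [c1 /andP[ac1 c1x] E1] := MVT_is_derive ax.
have [c2 /andP[xc2 c2z] E2] := MVT_is_derive xz.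
rewrite fa0 subr0 in E1; rewrite fz0 sub0r in E2.
rewrite ltNge; apply/negP => fx_ge0.
have dfc1 : 0 <= df c1 by rewrite -(@pmulr_lge0 _ (x - a)) ?subr_gt0 // -E1.
have : 0 < df c2 * (z - x).
  by rewrite mulr_gt0 ?subr_gt0 // (le_lt_trans dfc1) // df_incr ?(ltW ac1) ?(lt_trans c1x xc2).
by rewrite -E2; lra.
Qed.

Lemma gtr0_after_zeros x : z < x -> 0 < f x.
Proof.
move=> zx.
have [c1 /andP[ac1 c1z] E1] := MVT_is_derive az.
have [c2 /andP[zc2 _] E2] := MVT_is_derive zx.
rewrite fa0 fz0 subrr in E1; rewrite fz0 subr0 in E2.
have dfc1 : df c1 = 0.
  by apply/eqP; move/eqP: E1; rewrite eq_sym mulf_eq0 subr_eq0 (gt_eqF az) orbF.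
by rewrite E2 mulr_gt0 ?subr_gt0 // -dfc1 df_incr // ?ltW // (lt_trans c1z zc2).
Qed.

End ConvexZeros.
End MeanValue.

Section Hyperbolic.
Variable R : realType.
Implicit Types x y : R.

Lemma coshR_gt0 x : 0 < coshR x.
Proof. by rewrite /coshR divr_gt0 // addr_gt0 // expR_gt0. Qed.

Lemma coshRN x : coshR (- x) = coshR x.
Proof. by rewrite /coshR opprK addrC. Qed.

Lemma tanhRN x : tanhR (- x) = - tanhR x.
Proof.
by rewrite /tanhR opprK (addrC (expR (- x)) (expR x)) -mulNr opprB.
Qed.

Lemma tanhR0 : tanhR 0 = 0 :> R.
Proof. by rewrite /tanhR oppr0 subrr mul0r. Qed.

Lemma tanhR_sqr_lt1 x : tanhR x ^+ 2 < 1.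
Proof.
have := expR_gt0 x; have := expR_gt0 (- x).
rewrite /tanhR; set E := expR x; set F := expR (- x) => F0 E0.
by rewrite expr_div_n ltr_pdivrMr ?exprn_gt0 ?addr_gt0 // mul1r; nra.
Qed.

Lemma is_derive_expRN x : is_derive x 1 (fun y => expR (- y)) (- expR (- x)).
Proof. by rewrite -mulrN1; apply: is_derive1_comp. Qed.

Lemma is_derive_coshR x : is_derive x 1 (@coshR R) ((expR x - expR (- x)) / 2).
Proof.
have D := is_deriveM (is_deriveD (is_derive_expR x) (is_derive_expRN x))
  (is_derive_cst (2^-1 : R) x 1).
have -> : @coshR R = (expR + (fun y => expR (- y))) * cst 2^-1 by apply/funext.
apply: is_derive_eq D _.
by rewrite scaler0 add0r /GRing.scale /= mulrC.
Qed.

Lemma is_derive_ln_coshR x : is_derive x 1 (@ln R \o @coshR R) (tanhR x).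
Proof.
apply: is_derive_eq (is_derive1_comp (is_derive1_ln (coshR_gt0 x)) (is_derive_coshR x)) _.
have := expR_gt0 x; have := expR_gt0 (- x).
rewrite /tanhR /coshR; set E := expR x; set F := expR (- x) => F0 E0.
by field; rewrite gt_eqF // addr_gt0.
Qed.

Lemma is_derive_tanhR x : is_derive x 1 (@tanhR R) (1 - tanhR x ^+ 2).
Proof.
have E0 := expR_gt0 x; have F0 := expR_gt0 (- x).
have D := is_deriveM (is_deriveB (is_derive_expR x) (is_derive_expRN x))
  (is_deriveV _ (is_deriveD (is_derive_expR x) (is_derive_expRN x))).
have tanhE : @tanhR R = (expR - (fun y => expR (- y))) * (fun y => (expR y + expR (- y))^-1).
  by apply/funext.
rewrite {1}tanhE; apply: is_derive_eq (D _) _; first by rewrite /= gt_eqF // addr_gt0.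
rewrite !fctE /GRing.scale /= /tanhR; set E := expR x; set F := expR (- x) in F0 *.
by field; rewrite gt_eqF // addr_gt0.
Qed.

Lemma ltr_tanhR x y : x < y -> tanhR x < tanhR y.
Proof.
by move=> xy; apply: (gtr0_is_derive_lt is_derive_tanhR) => // c _; rewrite subr_gt0 tanhR_sqr_lt1.
Qed.

Lemma tanhR_ge0 x : 0 <= x -> 0 <= tanhR x.
Proof. by rewrite le_eqVlt => /predU1P[<-|/ltr_tanhR]; rewrite tanhR0 // => /ltW. Qed.

Lemma tanhR_norm x : tanhR `|x| = `|tanhR x|.
Proof.
case: (lerP 0 x) => x0; first by rewrite !ger0_norm ?tanhR_ge0.
by rewrite !ltr0_norm ?tanhRN // -tanhR0 ltr_tanhR.
Qed.

Lemma tanhR_lipschitz x y : `|tanhR x - tanhR y| <= `|x - y|.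
Proof.
rewrite -[X in _ <= X]mul1r.
apply: (is_derive_lipschitz (df := fun c => 1 - tanhR c ^+ 2)) => [|c].
  exact: is_derive_tanhR.
have t2_lt1 := tanhR_sqr_lt1 c; have t2_ge0 := sqr_ge0 (tanhR c).
by rewrite ger0_norm; lra.
Qed.

Lemma ler_dist_norm_tanhR (d u w : R) : d <= `|tanhR u - tanhR w| -> d <= `|tanhR u + tanhR w| ->
  d <= `| `|u| - w |.
Proof.
move=> far_w far_Nw; apply: le_trans (tanhR_lipschitz _ _); rewrite tanhR_norm.
case: (lerP 0 (tanhR u)) => [/ger0_norm -> //|/ltr0_norm ->].
by rewrite -opprD normrN.
Qed.
End Hyperbolic.

Section Potential.
Variable R : realType.
Implicit Types b w x y : R.

Definition potential b w := w * tanhR w - ln (coshR w) - b / 2 * tanhR w ^+ 2.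

Lemma potential_norm b w : potential b `|w| = potential b w.
Proof.
case: (ger0P w) => // _.
by rewrite /potential tanhRN coshRN sqrrN mulNr mulrN opprK.
Qed.

Lemma is_derive_potential b x :
  is_derive x 1 (potential b) ((1 - tanhR x ^+ 2) * (x - b * tanhR x)).
Proof.
have D := is_deriveB (is_deriveB (is_deriveM (is_derive_id x 1) (is_derive_tanhR x))
  (is_derive_ln_coshR x)) (is_deriveM (is_derive_cst (b / 2) x 1) (is_deriveX 2 (is_derive_tanhR x))).
set g := (X in is_derive _ _ X _) in D.
have -> : potential b = g by apply/funext.
apply: is_derive_eq D _.
by rewrite !fctE /GRing.scale /= mulr0 addr0 expr1 mulr1; field.
Qed.

Section Minimum.
Variables b ws : R.
Hypotheses (b_gt0 : 0 < b) (ws_gt0 : 0 < ws) (ws_fix : ws = b * tanhR ws).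

Let defect_incr x y : 0 <= x -> x < y -> 1 - b * (1 - tanhR x ^+ 2) < 1 - b * (1 - tanhR y ^+ 2).
Proof.
move=> x0 xy; have tx := tanhR_ge0 x0; have txy := ltr_tanhR xy.
have : tanhR x ^+ 2 < tanhR y ^+ 2 by rewrite ltr_pXn2r // ?nnegrE // (le_trans tx) // ltW.
by move=> sq; rewrite ltrD2l ltrN2 ltr_pM2l // ltrD2l ltrN2.
Qed.

Let is_derive_defect x :
  is_derive x 1 (fun w => w - b * tanhR w) (1 - b * (1 - tanhR x ^+ 2)).
Proof.
apply: is_derive_eq (is_deriveB (is_derive_id x 1) (is_deriveM (is_derive_cst b x 1) (is_derive_tanhR x))) _.
by rewrite /GRing.scale /= mulr0 addr0.
Qed.

Lemma defect_lt0 w : 0 < w < ws -> w - b * tanhR w < 0.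
Proof.
apply: (ltr0_between_zeros is_derive_defect defect_incr) => //.
- by rewrite tanhR0 mulr0 subr0.
- by rewrite -ws_fix subrr.
Qed.

Lemma defect_gt0 w : ws < w -> 0 < w - b * tanhR w.
Proof.
apply: (gtr0_after_zeros is_derive_defect defect_incr _ _ ws_gt0).
- by rewrite tanhR0 mulr0 subr0.
- by rewrite -ws_fix subrr.
Qed.

Lemma potential_decr x y : 0 <= x -> x < y -> y <= ws -> potential b y < potential b x.
Proof.
move=> x0 xy yws; apply: (ltr0_is_derive_gt (is_derive_potential b)) => // c /andP[xc cy].
by rewrite pmulr_rlt0 ?subr_gt0 ?tanhR_sqr_lt1 // defect_lt0 // (le_lt_trans x0 xc) (lt_le_trans cy).
Qed.

Lemma potential_incr x y : ws <= x -> x < y -> potential b x < potential b y.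
Proof.
move=> wsx xy; apply: (gtr0_is_derive_lt (is_derive_potential b)) => // c /andP[xc _].
by rewrite mulr_gt0 ?defect_gt0 ?(le_lt_trans wsx) // subr_gt0 tanhR_sqr_lt1.
Qed.

Lemma potential_min w : potential b ws <= potential b w.
Proof.
rewrite -(potential_norm b w); case: (ltgtP `|w| ws) => [lt|gt|->] //; apply: ltW.
- exact: potential_decr.
- exact: potential_incr.
Qed.

Lemma potential_gap d : 0 < d -> d < ws -> exists2 delta, 0 < delta &
  forall w, d <= `| `|w| - ws | -> potential b ws + delta <= potential b w.
Proof.
move=> d_gt0 dws.
have below := potential_decr (x := ws - d) (y := ws) ltac:(lra) ltac:(lra) (lexx _).
have above := potential_incr (x := ws) (y := ws + d) (lexx _) ltac:(lra).
exists (Num.min (potential b (ws - d) - potential b ws) (potential b (ws + d) - potential b ws)).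
  by rewrite lt_min !subr_gt0 below above.
move=> w; rewrite -(potential_norm b w) -lerBrDl; set v := `|w|.
case: (lerP ws v) => [wsv|vws] dv; rewrite ge_min !lerD2r; apply/orP.
- right; have : ws + d <= v by lra.
  have ws_le : ws <= ws + d by lra.
  by rewrite le_eqVlt => /predU1P[-> //|lt]; exact/ltW/(potential_incr ws_le lt).
- left; have : v <= ws - d by lra.
  have ws_ge : ws - d <= ws by lra.
  by rewrite le_eqVlt => /predU1P[-> //|lt]; exact/ltW/(potential_decr (normr_ge0 w) lt ws_ge).
Qed.
End Minimum.
End Potential.

Section CyclicQuadraticForm.
Variables (R : realType) (n : nat) (a b : R).
Implicit Types (x y z : 'rV[R]_n) (i k : 'I_n).

Lemma sum_ordS (F : 'I_n -> R) : \sum_i F (ordS i) = \sum_i F i.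
Proof. by rewrite [RHS](reindex_inj (@ordS_inj n)). Qed.

Lemma sum_mul_delta (F : 'I_n -> R) i : \sum_k F k * (k == i)%:R = F i.
Proof.
by rewrite (bigD1 i) //= eqxx mulr1 big1 ?addr0 // => k /negbTE ->; rewrite mulr0.
Qed.

Lemma Amat_entry i k :
  Amat n a b i k = b * (i == k)%:R + a * (ordS i == k)%:R + a * (ordS k == i)%:R.
Proof. by rewrite /Amat /cshift !mxE mulr_natr mulrDr addrA. Qed.

Lemma qform_Amat y z : qform (Amat n a b) y z =
  \sum_i (b * y 0 i * z 0 i + a * y 0 i * z 0 (ordS i) + a * y 0 (ordS i) * z 0 i).
Proof.
rewrite /qform mxE.
under eq_bigr => k _ do rewrite mxE big_distrl /=.
transitivity (\sum_k \sum_i (b * y 0 i * z 0 k * (i == k)%:R)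
  + \sum_k \sum_i (a * y 0 i * z 0 k * (ordS i == k)%:R)
  + \sum_k \sum_i (a * y 0 i * z 0 k * (ordS k == i)%:R)).
  rewrite -!big_split; apply: eq_bigr => k _ /=; rewrite -!big_split.
  by apply: eq_bigr => i _ /=; rewrite Amat_entry mxE; ring.
rewrite [X in _ + X + _]exchange_big /= !big_split /=.
congr (_ + _ + _); apply: eq_bigr => i _.
- by rewrite -[RHS](sum_mul_delta (fun k => b * y 0 k * z 0 i) i).
- rewrite -[RHS](sum_mul_delta (fun k => a * y 0 i * z 0 k)).
  by apply: eq_bigr => k _; rewrite eq_sym.
- rewrite -[RHS](sum_mul_delta (fun k => a * y 0 k * z 0 i)).
  by apply: eq_bigr => k _; rewrite eq_sym.
Qed.

Definition local_field y k := qform (Amat n a b) y (ebasis R k).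
Definition local_mag y k := tanhR (local_field y k).
Definition mag_dev y k := y 0 k - local_mag y k.

Definition site_energy y i :=
  (b - 2 * a) / 2 * mag_dev y i ^+ 2 + a / 2 * (mag_dev y i + mag_dev y (ordS i)) ^+ 2
  + potential (b + 2 * a) (local_field y i)
  + a / 2 * (local_mag y i - local_mag y (ordS i)) ^+ 2.

Lemma local_fieldE y k : local_field y k = (y *m Amat n a b) 0 k.
Proof.
rewrite /local_field /qform mxE -[RHS](sum_mul_delta (fun j => (y *m Amat n a b) 0 j) k).
by apply: eq_bigr => j _; congr (_ * _); rewrite !mxE.
Qed.

Lemma sum_local_field y z : \sum_k local_field y k * z 0 k = qform (Amat n a b) y z.
Proof. by rewrite [RHS]mxE; apply: eq_bigr => k _; rewrite local_fieldE [z^T _ _]mxE. Qed.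

Lemma phiN_site_energy y : phiN a b y = \sum_i site_energy y i.
Proof.
pose t := \row_k local_mag y k.
have ln_coshE : \sum_k ln (coshR (local_field y k)) = qform (Amat n a b) y t
    - \sum_k potential (b + 2 * a) (local_field y k) - \sum_k ((b + 2 * a) / 2 * local_mag y k ^+ 2).
  rewrite -sum_local_field -!sumrB; apply: eq_bigr => k _.
  by rewrite mxE /potential /local_mag; ring.
have telescope : \sum_i a / 2 * ((mag_dev y i ^+ 2 + local_mag y i ^+ 2)
    - (mag_dev y (ordS i) ^+ 2 + local_mag y (ordS i) ^+ 2)) = 0.
  by rewrite -big_distrr /= sumrB (sum_ordS (fun i => mag_dev y i ^+ 2 + local_mag y i ^+ 2)) subrr mulr0.
rewrite /phiN ln_coshE !qform_Amat -[RHS]addr0 -[X in _ = _ + X]telescope big_distrl -!sumrB -big_split.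
apply: eq_bigr => i _; rewrite !mxE /site_energy /mag_dev /=.
move: (y 0 i) (y 0 (ordS i)) (local_mag y i) (local_mag y (ordS i)) => u u' v v'.
move: (potential _ _) => K.
by field.
Qed.

Lemma local_field_const c k : local_field (const_vec n c) k = (b + 2 * a) * c.
Proof.
rewrite /local_field qform_Amat.
under eq_bigr => i _ do rewrite /const_vec /ebasis !mxE.
rewrite !big_split /= (sum_ordS (fun i => a * c * (i == k)%:R)).
by rewrite !(sum_mul_delta _ k); ring.
Qed.

Lemma phiN_const c : c = tanhR ((b + 2 * a) * c) ->
  phiN a b (const_vec n c) = \sum_(i < n) potential (b + 2 * a) ((b + 2 * a) * c).
Proof.
move=> c_fix; rewrite phiN_site_energy; apply: eq_bigr => i _.
have magE k : local_mag (const_vec n c) k = c by rewrite /local_mag local_field_const -c_fix.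
have devE k : mag_dev (const_vec n c) k = 0 by rewrite /mag_dev magE mxE subrr.
by rewrite /site_energy !devE !magE local_field_const subrr; ring.
Qed.

Lemma site_energy_lb y i : 0 <= a -> 2 * a <= b ->
  [/\ potential (b + 2 * a) (local_field y i) <= site_energy y i,
      potential (b + 2 * a) (local_field y i) + (b - 2 * a) / 2 * mag_dev y i ^+ 2
        <= site_energy y i
    & potential (b + 2 * a) (local_field y i)
        + a / 2 * (local_mag y i - local_mag y (ordS i)) ^+ 2 <= site_energy y i].
Proof.
rewrite /site_energy; move: (mag_dev y i) (mag_dev y (ordS i)) => v v' a_ge0 ab.
move: (potential _ _) (local_mag y i - local_mag y (ordS i)) => K t.
have := sqr_ge0 v; have := sqr_ge0 (v + v'); have := sqr_ge0 t => *.
by split; nra.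
Qed.
End CyclicQuadraticForm.

Lemma iter_ordS n p (k : 'I_n) : val (iter p (@ordS n) k) = ((k + p) %% n)%N.
Proof.
elim: p => [|p IH] /=; first by rewrite addn0 modn_small.
by rewrite IH -addn1 modnDml -addnA addn1.
Qed.

Lemma ordS_switch n (P : pred 'I_n) k j : P k -> ~~ P j -> exists i, P i && ~~ P (ordS i).
Proof.
move=> Pk nPj; apply/not_existsP => no_switch.
have PS i : P i -> P (ordS i).
  by move=> Pi; apply/negPn/negP => nPS; apply: (no_switch i); rewrite Pi nPS.
have P_iter p : P (iter p (@ordS n) k) by elim: p => //= p; apply: PS.
have := P_iter (j + n - k)%N.
suff -> : iter (j + n - k) (@ordS n) k = j by rewrite (negbTE nPj).
apply: val_inj; rewrite iter_ordS addnBA; last by rewrite ltnW // ltn_addl.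
by rewrite addKn modnDr modn_small.
Qed.

Lemma exists_bad_site (R : realFieldType) n (y t : 'I_n -> R) (m r : R) :
  (exists j, ~ (m - r <= y j <= m + r)) -> (exists k, ~ (- m - r <= y k <= - m + r)) ->
  [\/ exists i, r / 2 <= `|y i - t i|,
      exists i, r / 2 <= `|t i - m| /\ r / 2 <= `|t i + m|
    | exists i, `|t i - m| < r / 2 /\ `|t (ordS i) + m| < r / 2].
Proof.
move=> [j yj] [k yk].
case: (pselect (exists i, r / 2 <= `|y i - t i|)) => [|no_dev]; first by constructor 1.
case: (pselect (exists i, r / 2 <= `|t i - m| /\ r / 2 <= `|t i + m|)) => [|no_far].
  by constructor 2.
constructor 3.
have dev_lt i : `|y i - t i| < r / 2.
  by rewrite ltNge; apply/negP => ?; apply: no_dev; exists i.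
have near i : `|t i - m| < r / 2 \/ `|t i + m| < r / 2.
  case: (ltP `|t i - m| (r / 2)) => ?; [by left | right].
  by rewrite ltNge; apply/negP => ?; apply: no_far; exists i.
pose P i := `|t i - m| < r / 2.
have nPj : ~~ P j.
  apply/negP; rewrite /P; move: (dev_lt j); rewrite !ltr_norml => dj tj.
  by apply: yj; apply/andP; split; lra.
have Pk : P k.
  case: (near k) => // tk; exfalso; move: (dev_lt k) tk; rewrite !ltr_norml => dk tk.
  by apply: yk; apply/andP; split; lra.
have [i /andP[Pi nPSi]] := ordS_switch Pk nPj.
by exists i; split => //; case: (near (ordS i)) => // PSi; rewrite /P PSi in nPSi.
Qed.

Lemma near_opposite_sqr_sub_ge (R : realFieldType) (t t' m r : R) : r < m ->
  `|t - m| < r / 2 -> `|t' + m| < r / 2 -> (2 * m - r) ^+ 2 <= (t - t') ^+ 2.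
Proof.
rewrite !ltr_norml => rm /andP[t1 t2] /andP[t3 t4].
by rewrite !expr2; apply: ler_pM; lra.
Qed.

Lemma ler_sum_gap (R : numDomainType) n (F : 'I_n -> R) c rho :
  (forall i, c <= F i) -> (exists i, c + rho <= F i) -> \sum_(i < n) c + rho <= \sum_i F i.
Proof.
move=> c_le [i0 gap]; rewrite (bigD1 i0) //= [X in _ <= X](bigD1 i0) //= addrAC.
by rewrite lerD // ler_sum.
Qed.

Lemma phiN_gap_off_cubes (R : realType) (a b m r : R) :
  0 < 2 * a -> 2 * a < b -> 1 < b + 2 * a -> m = tanhR ((b + 2 * a) * m) -> 0 < r -> r < m ->
  exists2 rho, 0 < rho & forall n (y : 'rV[R]_n),
    (exists i, ~ (m - r <= y 0 i <= m + r)) -> (exists i, ~ (- m - r <= y 0 i <= - m + r)) ->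
    phiN a b (const_vec n m) + rho <= phiN a b y.
Proof.
move=> a_gt0 ab b'_gt1 m_fix r_gt0 rm.
have a_ge0 : 0 <= a by lra.
have r2_ge0 : 0 <= r / 2 by lra.
have b'_gt0 : 0 < b + 2 * a by lra.
have m_lt_ws : m < (b + 2 * a) * m by rewrite ltr_pMl //; lra.
have ws_gt0 : 0 < (b + 2 * a) * m by rewrite mulr_gt0 //; lra.
have ws_fix : (b + 2 * a) * m = (b + 2 * a) * tanhR ((b + 2 * a) * m) by rewrite -m_fix.
have Kmin := potential_min b'_gt0 ws_gt0 ws_fix.
have [delta delta_gt0 Kgap] := potential_gap b'_gt0 ws_gt0 ws_fix (d := r / 2) ltac:(lra) ltac:(lra).
pose c1 := (b - 2 * a) / 2 * (r / 2) ^+ 2.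
pose c3 := a / 2 * (2 * m - r) ^+ 2.
have c1_gt0 : 0 < c1 by rewrite /c1 mulr_gt0 ?exprn_gt0 //; lra.
have c3_gt0 : 0 < c3 by rewrite /c3 mulr_gt0 ?exprn_gt0 //; lra.
exists (Num.min (Num.min c1 delta) c3); first by rewrite !lt_min c1_gt0 delta_gt0 c3_gt0.
have [rho_c1 rho_delta rho_c3] : [/\ Num.min (Num.min c1 delta) c3 <= c1,
  Num.min (Num.min c1 delta) c3 <= delta & Num.min (Num.min c1 delta) c3 <= c3].
  by rewrite !ge_min !lexx !orbT.
move: (Num.min _ _) rho_c1 rho_delta rho_c3 => rho rho_c1 rho_delta rho_c3 n y yj yk.
have lb i := site_energy_lb y i a_ge0 (ltW ab).
rewrite phiN_const // phiN_site_energy; apply: ler_sum_gap => [i|].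
  by case: (lb i) => + _ _; apply: le_trans (Kmin _).
have Kmin_i i := Kmin (local_field a b y i).
case: (exists_bad_site (local_mag a b y) yj yk) => -[i Hi];
  exists i; case: (lb i) => lb_pot lb_dev lb_switch.
- apply: le_trans lb_dev; apply: lerD (Kmin_i i) _; apply: le_trans rho_c1 _.
  apply: ler_wpM2l; first by lra.
  by rewrite -[X in _ <= X]real_normK ?num_real // ler_pXn2r ?nnegrE ?normr_ge0.
- apply: le_trans lb_pot; apply: le_trans (Kgap _ _); first by rewrite lerD2l.
  by case: Hi; rewrite /local_mag {1 2}m_fix; apply: ler_dist_norm_tanhR.
- apply: le_trans lb_switch; apply: lerD (Kmin_i i) _; apply: le_trans rho_c3 _.
  apply: ler_wpM2l; first by lra.
  by case: Hi; apply: near_opposite_sqr_sub_ge.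
Qed.

Section Cubes.
Variable R : realType.

Lemma not_in_cube_scale n (c l lo hi : R) (x : 'rV[R]_n) : 0 < c -> c * l = 1 ->
  ~ in_cube (c * lo) (c * hi) x -> exists i, ~ (lo <= (l *: x) 0 i <= hi).
Proof.
move=> c_gt0 cl out; apply/existsNP => inside; apply: out => i.
have /andP[lo_le le_hi] := inside i; rewrite mxE in lo_le le_hi.
by rewrite -[x 0 i]mul1r -cl -mulrA !ler_pM2l // lo_le le_hi.
Qed.

Lemma in_ball0 n (x : 'rV[R]_n) i : in_ball 0 x -> x 0 i = 0.
Proof.
rewrite /in_ball => ball; apply/eqP; rewrite -sqrf_eq0 eq_le sqr_ge0 andbT.
have : \sum_(j < n) x 0 j ^+ 2 <= 0 by rewrite -sqrtr_eq0 eq_le ball sqrtr_ge0.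
apply: le_trans; rewrite (bigD1 i) //= lerDl.
by apply: sumr_ge0 => j _; exact: sqr_ge0.
Qed.

Lemma DeltaNr_off_cubes N n (Rad m r : R) (x : 'rV[R]_n) : DeltaNr N Rad m r x ->
  (exists i, ~ (m - r <= (Num.sqrt (n%:R / N%:R) *: x) 0 i <= m + r)) /\
  (exists i, ~ (- m - r <= (Num.sqrt (n%:R / N%:R) *: x) 0 i <= - m + r)).
Proof.
rewrite /DeltaNr => -[ball /not_orP[off_p off_n]].
(* For N = 0 the ball is {0}, and so is the cube since N / n = 0. *)
case: N ball off_p off_n => [|N] ball off_p off_n.
  rewrite sqrtr0 mulr0 in ball; exfalso; apply: off_p => i.
  by rewrite in_ball0 // mul0r sqrtr0 !mul0r lexx.
case: n x ball off_p off_n => [|n] x ball off_p off_n.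
  by exfalso; apply: off_p => -[].
have c_gt0 : 0 < Num.sqrt (N.+1%:R / n.+1%:R : R) by rewrite sqrtr_gt0 divr_gt0 // ltr0n.
have cl : Num.sqrt (N.+1%:R / n.+1%:R) * Num.sqrt (n.+1%:R / N.+1%:R) = 1 :> R.
  rewrite -sqrtrM ?divr_ge0 ?ler0n // mulrA divfK ?pnatr_eq0 // mulfV ?pnatr_eq0 //.
  exact: sqrtr1.
by split; apply: not_in_cube_scale c_gt0 cl _.
Qed.
End Cubes.

Unset Implicit Arguments.

Theorem lemma7p10 (R : realType) (alpha beta : R) (s : nat -> nat) (Rad m r : R) :
  0 < 2 * alpha -> 2 * alpha < beta -> 1 < beta + 2 * alpha ->
  (* s_N = o(sqrt N / log N) *)
  (forall eps : R, 0 < eps -> exists N0 : nat, forall N : nat, (N0 <= N)%N ->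
     (s N)%:R <= eps * (Num.sqrt N%:R / ln N%:R)) ->
  is_mstar alpha beta m ->
  (* R > 2 lambda_max / lambda_min for every N *)
  (forall (N : nat) (lmin lmax : R),
     is_min_eig (Amat (s N) alpha beta) lmin ->
     is_max_eig (Amat (s N) alpha beta) lmax -> 2 * lmax / lmin < Rad) ->
  0 < r -> r < m ->
  exists rho : R, 0 < rho /\
    forall (N : nat) (x : 'rV[R]_(s N)),
      DeltaNr N Rad m r x ->
      phiN alpha beta (const_vec (s N) m) + rho
        <= phiN alpha beta (Num.sqrt ((s N)%:R / N%:R) *: x).
Proof.
(* The gap holds off the two cubes uniformly in the dimension. *)
move=> a_gt0 ab b'_gt1 _ [m_fix _] _ r_gt0 r_lt_m.
have [rho rho_gt0 gap] := phiN_gap_off_cubes a_gt0 ab b'_gt1 m_fix r_gt0 r_lt_m.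
exists rho; split => // N x /DeltaNr_off_cubes[off_p off_n].
exact: gap.
Qed.
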